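(* Let $G$ be a finite connected undirected weighted graph, unknown to the agents, with edge weights $w_e>0$ and $L=\sum_{e}w_e$. Two agents starting at the same node and both executing navigation table $T_{\mathrm{explo}}$ (described in the context) in the asynchronous model perform collective exploration of $G$ (every edge is traversed) while paying a total cost of at most $2L$, where traversing edge $e$ costs $w_e$.
   Context: Model. A passage (port) is an endpoint of an edge at one of its nodes. Each passage carries one marker; initially all passages are unmarked ($\emptyset$). The graph is unlabelled; an agent sees only the markers at its current node and remembers only the passage by which it arrived. A move of an agent at $u$: choose a passage at $u$ (or stop), possibly change its marker, traverse the edge to $v$, read the markers at $v$, possibly change the marker of the arrival passage. In the asynchronous model an adversary chooses, at each round, which agent performs a whole move. Navigation tables: ordered rows $(p_u,p_u',p_v,p_v')$; the agent takes the first row such that some passage at $u$ has marker $p_u$ (rows with equal $p_u$ are distinguished after arrival by the $p_v$ condition), sets that passage's marker to $p_u'$, traverses it, and sets the arrival passage's marker to $p_v'$; dash means any/unchanged; if no row applies the agent stops. A node is ''discovered'' if visited before. Table $T_{\mathrm{explo}}$ (priority order): (1) B, D, -, D; (2) $\emptyset$, E, E (arrival passage marked E), D; (3) $\emptyset$, E, $v$ discovered, B; (4) $\emptyset$, E, $v$ undiscovered, F; (5) F, D, -, D; (6) E, D, -, D. *)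

From HB Require Import structures.
From mathcomp Require Import all_boot all_order all_algebra.
Set Implicit Arguments. Unset Strict Implicit. Unset Printing Implicit Defensive.
Import Order.TTheory GRing.Theory Num.Theory.
Local Open Scope ring_scope.

(* Markers carried by passages: empty, E, D, B, F. *)
Inductive marker := M0 | ME | MD | MB | MF.

Notation agent := bool.

Section Explo.
Variable R : realFieldType.
Variable T : finType.
Variable adj : rel T.          (* simple undirected graph: symmetric, irreflexive *)
Variable w : {set T} -> R.     (* weight of the edge {u,v} *)

(* The passage at u leading to v (for adj u v) is identified with (u,v);
   mk u v is its marker. *)
Record state := State {
  pos : agent -> T;
  halted : agent -> bool;
  mk : T -> T -> marker;
  visited : {set T};
  explored : {set {set T}};
  cost : R
}.

Definition edge_set : {set {set T}} :=
  [set [set x.1; x.2] | x : T * T & adj x.1 x.2].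

Definition total_weight : R := \sum_(e in edge_set) w e.

Definition init (start : T) : state :=
  State (fun _ => start) (fun _ => false) (fun _ _ => M0) [set start] set0 0.

Definition has_mk (s : state) (u : T) (x : marker) : Prop :=
  exists v, adj u v /\ mk s u v = x.

Definition upd (m : T -> T -> marker) (u v : T) (x : marker) :=
  fun a b => if (a == u) && (b == v) then x else m a b.

Definition move (s : state) (a : agent) (v : T) (mu mv : marker) : state :=
  let u := pos s a in
  State (fun b => if b == a then v else pos s b)
        (halted s)
        (upd (upd (mk s) u v mu) v u mv)
        (v |: visited s)
        ([set u; v] |: explored s)
        (cost s + w [set u; v]).

Definition halt (s : state) (a : agent) : state :=
  State (pos s) (fun b => if b == a then true else halted s b)
        (mk s) (visited s) (explored s) (cost s).

(* One whole move of agent a following the navigation table T_explo,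
   rows tried in priority order (1)-(6). *)
Inductive step (a : agent) (s : state) : state -> Prop :=
| step_halted : halted s a -> step a s s
| step_row1 v : ~~ halted s a -> adj (pos s a) v -> mk s (pos s a) v = MB ->
    step a s (move s a v MD MD)
| step_row2 v : ~~ halted s a -> ~ has_mk s (pos s a) MB ->
    adj (pos s a) v -> mk s (pos s a) v = M0 -> mk s v (pos s a) = ME ->
    step a s (move s a v ME MD)
| step_row3 v : ~~ halted s a -> ~ has_mk s (pos s a) MB ->
    adj (pos s a) v -> mk s (pos s a) v = M0 -> mk s v (pos s a) <> ME ->
    v \in visited s ->
    step a s (move s a v ME MB)
| step_row4 v : ~~ halted s a -> ~ has_mk s (pos s a) MB ->
    adj (pos s a) v -> mk s (pos s a) v = M0 -> mk s v (pos s a) <> ME ->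
    v \notin visited s ->
    step a s (move s a v ME MF)
| step_row5 v : ~~ halted s a -> ~ has_mk s (pos s a) MB ->
    ~ has_mk s (pos s a) M0 ->
    adj (pos s a) v -> mk s (pos s a) v = MF ->
    step a s (move s a v MD MD)
| step_row6 v : ~~ halted s a -> ~ has_mk s (pos s a) MB ->
    ~ has_mk s (pos s a) M0 -> ~ has_mk s (pos s a) MF ->
    adj (pos s a) v -> mk s (pos s a) v = ME ->
    step a s (move s a v MD MD)
| step_stop : ~~ halted s a -> ~ has_mk s (pos s a) MB ->
    ~ has_mk s (pos s a) M0 -> ~ has_mk s (pos s a) MF ->
    ~ has_mk s (pos s a) ME ->
    step a s (halt s a).

End Explo.

(* The markers E and F trace a depth-first tree: F marks the passage from a
   node to its parent and E the passage back; an E facing a B records a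
   non-tree edge whose traverser still has to come back, and D marks a passage
   that will never be used again.  Every traversal raises the rank of both
   passages of its edge by one, so twice the cost is the weight-by-rank sum
   over passages, at most 4L.  The rank sum plus the halting flags is a
   bounded potential raised by every move of an active agent, so by fairness
   both agents stop.  The heart of the proof is the invariant that every
   discovered node with a passage not yet marked D lies above, in the tree, a
   node for which some agent is responsible.  Once both agents have stopped
   nobody is responsible for anything, so all passages at discovered nodes are
   marked D; by connectivity every node is discovered and every edge is
   traversed. *)

From HB Require Import structures.
From mathcomp Require Import all_boot all_order all_algebra.
From mathcomp Require Import zify ring lra.
From Stdlib Require Import Relation_Operators.
Import Order.TTheory GRing.Theory Num.Theory.

Set Implicit Arguments.
Unset Strict Implicit.
Unset Printing Implicit Defensive.

Local Notation reach := (clos_refl_trans_1n _).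

Section Reachability.
Variable A : Type.
Implicit Types (x y z t : A).

Lemma reach_sub e e' x y :
  (forall a b, e a b -> e' a b) -> reach e x y -> reach e' x y.
Proof.
move=> ee'; elim=> [|a b c eab _ IH]; first exact: rt1n_refl.
exact: rt1n_trans (ee' _ _ eab) IH.
Qed.

Lemma reach_rcons e x y z : reach e x y -> e y z -> reach e x z.
Proof.
elim=> [a|a b c eab _ IH] eyz; first exact: rt1n_trans eyz (rt1n_refl _ _ _).
exact: rt1n_trans eab (IH eyz).
Qed.

Lemma reach_sourceless e x t : (forall a, ~ e a t) -> reach e x t -> x = t.
Proof.
move=> no_in xt; suff /(_ t xt erefl) : forall y, reach e x y -> y = t -> x = t by [].
move=> y; elim=> [//|a b c eab _ IH] Ect.
by move: eab; rewrite (IH Ect) => /no_in.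
Qed.

Section Cut.
Variables (e e' : A -> A -> Prop) (p q : A).
Hypothesis e_cut : forall {a b}, e a b -> e' a b \/ (a = p /\ b = q).

Lemma reach_cut x y : reach e x y -> reach e' x y \/ reach e' x p.
Proof.
elim=> [|a b c eab _ IH]; first by left; apply: rt1n_refl.
have [e'ab|[-> _]] := e_cut eab; last by right; apply: rt1n_refl.
by case: IH => IH; [left|right]; apply: rt1n_trans e'ab IH.
Qed.

Lemma reach_cut_into x t :
  (forall a, e a t -> a = p) -> reach e x t -> x = t \/ reach e' x p.
Proof.
move=> into_t xt.
suff /(_ t xt erefl) : forall y, reach e x y -> y = t -> x = t \/ reach e' x p by [].
move=> y; elim=> [|a b c eab _ IH Ect]; first by left.
have [e'ab|[-> _]] := e_cut eab; last by right; apply: rt1n_refl.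
case: (IH Ect) => [Ebt|]; last by right; apply: rt1n_trans e'ab _.
by move: eab; rewrite Ebt => /into_t ->; right; apply: rt1n_refl.
Qed.

(* Walks through the cut edge [p -> q], or ending at [u], are stopped at the
   unique predecessor [p] of [u]; [u] itself is rescued by a successor. *)
Lemma reach_witness_cut (U U' V V' : A -> Prop) u :
  (forall x, U x -> exists2 y, reach e x y & V y) ->
  (forall a b, e' a b -> e a b) ->
  (forall a, e a u -> a = p /\ p <> u) ->
  V' p \/ p = u ->
  (forall y, V y -> V' y \/ y = u) ->
  (forall x, U' x -> U x) ->
  (U' u -> V' u \/ exists c, [/\ e' u c, U c & c <> u]) ->
  forall x, U' x -> exists2 y, reach e' x y & V' y.
Proof.
move=> UV e'e into_u Vp VV' U'U Uu.
have to_p z : reach e' z p -> (exists2 y, reach e' z y & V' y) \/ z = u.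
  case: Vp => [V'p|Epu] zp; first by left; exists p.
  right; rewrite Epu in zp; apply: (@reach_sourceless e); last exact: reach_sub zp.
  by move=> a /into_u [_ /(_ Epu)].
have to_u z : reach e z u -> (exists2 y, reach e' z y & V' y) \/ z = u.
  by case/(@reach_cut_into z u (fun a eau => (into_u a eau).1)) => [|/to_p]; [right|].
have fromU z : U z -> (exists2 y, reach e' z y & V' y) \/ z = u.
  case/UV=> y /reach_cut [zy|/to_p //] /VV' [V'y|Eyu]; first by left; exists y.
  by apply: to_u; rewrite -Eyu; apply: reach_sub zy.
move=> x U'x; have [//|Exu] := fromU x (U'U x U'x); subst x.
have [V'u|[c [e'uc Uc Ncu]]] := Uu U'x; first by exists u => //; apply: rt1n_refl.
have [[y cy V'y]|//] := fromU c Uc.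
by exists y => //; apply: rt1n_trans e'uc cy.
Qed.

End Cut.
End Reachability.

Lemma sum_adj_pairs (V : nmodType) (T : finType) (adj : rel T)
    (f : {set T} -> V) : symmetric adj -> irreflexive adj ->
  (\sum_(x : T * T | adj x.1 x.2) f [set x.1; x.2] =
   (\sum_(E in edge_set adj) f E) *+ 2)%R.
Proof.
move=> adj_sym adj_irr.
rewrite (eq_bigl [in [set x : T * T | adj x.1 x.2]]); last by move=> x; rewrite !inE.
rewrite (partition_big_imset (fun x : T * T => [set x.1; x.2])) -sumrMnl.
apply: eq_bigr => E /imsetP [[p q]]; rewrite inE /= => pq ->.
have neq_pq : p != q by apply: contraTneq pq => ->; rewrite adj_irr.
rewrite (eq_bigr (fun _ => f [set p; q])) => [|x /andP [_ /eqP ->] //].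
rewrite (eq_bigl [in [set (p, q); (q, p)]]) => [|[x y] /=].
  by rewrite sumr_const cards2 xpair_eqE (negbTE neq_pq).
rewrite !inE /= !xpair_eqE; apply/andP/idP => [[xy /eqP Exy]|].
  have: x \in [set p; q] by rewrite -Exy set21.
  have: y \in [set p; q] by rewrite -Exy set22.
  have: x != y by apply: contraTneq xy => ->; rewrite adj_irr.
  by rewrite !in_set2 => /[swap] /orP [] /eqP -> /[swap] /orP [] /eqP ->;
     rewrite !eqxx ?orbT.
by case/orP=> /andP [/eqP -> /eqP ->]; rewrite ?pq // adj_sym pq setUC.
Qed.

Lemma ltn_sum (I : finType) (F G : I -> nat) i0 :
  (forall i, F i <= G i) -> F i0 < G i0 -> \sum_i F i < \sum_i G i.
Proof.
move=> leFG ltFG0; rewrite (bigD1 i0) //= [X in _ < X](bigD1 i0) //=.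
by rewrite -addSn; apply: leq_add => //; apply: leq_sum.
Qed.

Section Exploration.
Variables (R : realFieldType) (T : finType) (adj : rel T) (w : {set T} -> R).
Hypotheses (adj_sym : symmetric adj) (adj_irr : irreflexive adj).
Implicit Types (s : state R T) (x y z : T).

(* The rank of a passage is the number of traversals of its edge so far. *)
Definition rank (m : marker) : nat := match m with M0 => 0 | MD => 2 | _ => 1 end.

Definition compatible (m m' : marker) : bool :=
  match m, m' with
  | M0, M0 | ME, MB | MB, ME | ME, MF | MF, ME | MD, MD => true
  | _, _ => false
  end.

Definition is_back (m : marker) : bool := if m is MB then true else false.

Definition backs s x : nat := \sum_y is_back (mk s x y).

Definition active s x : nat :=
  ((pos s true == x) && ~~ halted s true) + ((pos s false == x) && ~~ halted s false).

(* Some agent is responsible for [x]: one that must come back to [x] through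
   a B passage, or one standing at [x] that owes no such return. *)
Definition attended s x : Prop := (exists z, mk s z x = MB) \/ backs s x < active s x.

Definition tree_edge s x y : Prop := mk s x y = ME /\ mk s y x = MF.

Definition unfinished s x : Prop :=
  x \in visited s /\ exists2 y, adj x y & mk s x y <> MD.

Definition all_attended s : Prop :=
  forall x, unfinished s x -> exists2 y, reach (tree_edge s) x y & attended s y.

Definition weighted_rank s : R :=
  (\sum_(x : T * T | adj x.1 x.2) w [set x.1; x.2] * (rank (mk s x.1 x.2))%:R)%R.

Definition potential s : nat :=
  \sum_(x : T * T) rank (mk s x.1 x.2) + halted s true + halted s false.

Record invariant s : Prop := {
  pos_visited a : pos s a \in visited s;
  marked_explored x y : mk s x y <> M0 ->
    [/\ adj x y, x \in visited s, y \in visited s & [set x; y] \in explored s];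
  compatible_mk x y : adj x y -> compatible (mk s x y) (mk s y x);
  parent_unique x y z : mk s x y = MF -> mk s x z = MF -> y = z;
  backs_le_active x : backs s x <= active s x;
  attended_unfinished : all_attended s;
  cost_weighted_rank : (2 * cost s)%R = weighted_rank s }.

Lemma adj_neq x y : adj x y -> x != y.
Proof. by apply: contraTneq => ->; rewrite adj_irr. Qed.

Lemma compatible_sym m m' : compatible m m' = compatible m' m.
Proof. by case: m; case: m'. Qed.

Lemma not_has_mk s x y m : ~ has_mk adj s x m -> adj x y -> mk s x y <> m.
Proof. by move=> no_m xy Exy; apply: no_m; exists y. Qed.

Lemma backs_gt0 s x y : mk s x y = MB -> 0 < backs s x.
Proof. by move=> Exy; rewrite /backs (bigD1 y) //= Exy. Qed.

Lemma backs_change s1 s2 x y0 : (forall y, y != y0 -> mk s2 x y = mk s1 x y) ->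
  backs s2 x + is_back (mk s1 x y0) = backs s1 x + is_back (mk s2 x y0).
Proof.
move=> E; rewrite /backs (bigD1 y0) //= [X in _ = X + _](bigD1 y0) //=.
by under eq_bigr => y /E -> do []; lia.
Qed.

Section InvFacts.
Variable s : state R T.
Hypothesis Is : invariant s.

Lemma marked_adj x y : mk s x y <> M0 -> adj x y.
Proof. by case/(marked_explored Is). Qed.

Lemma marked_visitedl x y : mk s x y <> M0 -> x \in visited s.
Proof. by case/(marked_explored Is). Qed.

Lemma marked_visitedr x y : mk s x y <> M0 -> y \in visited s.
Proof. by case/(marked_explored Is). Qed.

Lemma backs_eq0 x : ~ has_mk adj s x MB -> backs s x = 0.
Proof.
move=> no_back; rewrite /backs big1 // => y _.
case E: (mk s x y) => //; exfalso; apply: (not_has_mk no_back _ E).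
by apply: marked_adj; rewrite E.
Qed.

End InvFacts.

Lemma all_attended_sub s s' :
  all_attended s ->
  (forall x y, tree_edge s x y -> tree_edge s' x y) ->
  (forall y, attended s y -> attended s' y) ->
  (forall x, unfinished s' x -> unfinished s x) -> all_attended s'.
Proof.
move=> att tree_sub att_sub unf_sub x /unf_sub /att [y xy Ay].
by exists y; [apply: reach_sub xy | apply: att_sub].
Qed.

Section Move.
Variables (s : state R T) (a : agent) (u v : T) (mu mv : marker).
Hypotheses (pos_a : pos s a = u) (uv : adj u v) (active_a : ~~ halted s a).
Hypothesis Is : invariant s.
Let s' := move w s a v mu mv.

Lemma neq_uv : u != v. Proof. exact: adj_neq. Qed.
Lemma neq_vu : v != u. Proof. by rewrite eq_sym neq_uv. Qed.

Lemma mk_move x y : mk s' x y =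
  if (x == v) && (y == u) then mv else if (x == u) && (y == v) then mu else mk s x y.
Proof. by rewrite /s' /move /upd /= pos_a. Qed.

Variant mk_move_spec x y : marker -> marker -> Prop :=
  | MkMoveFwd of x = u & y = v : mk_move_spec x y mu mv
  | MkMoveBwd of x = v & y = u : mk_move_spec x y mv mu
  | MkMoveOther : mk_move_spec x y (mk s x y) (mk s y x).

Lemma mk_moveP x y : mk_move_spec x y (mk s' x y) (mk s' y x).
Proof.
rewrite !mk_move.
have [/andP [/eqP -> /eqP ->]|Nuv] := boolP ((x == u) && (y == v)).
  by rewrite (negbTE neq_uv) (negbTE neq_vu) !eqxx; constructor.
have [/andP [/eqP -> /eqP ->]|Nvu] := boolP ((x == v) && (y == u)).
  by rewrite (negbTE neq_uv) !eqxx; constructor.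
have Nuv' : (y == u) && (x == v) = false by rewrite andbC (negbTE Nvu).
have Nvu' : (y == v) && (x == u) = false by rewrite andbC (negbTE Nuv).
by rewrite Nuv' Nvu'; constructor.
Qed.

Lemma visited_move : visited s' = v |: visited s.
Proof. by []. Qed.

Lemma explored_move : explored s' = [set u; v] |: explored s.
Proof. by rewrite /s' /move /= pos_a. Qed.

Lemma mk_move_uv : mk s' u v = mu.
Proof. by rewrite mk_move (negbTE neq_uv) !eqxx. Qed.

Lemma mk_move_vu : mk s' v u = mv.
Proof. by rewrite mk_move !eqxx. Qed.

Lemma mk_move_u y : y != v -> mk s' u y = mk s u y.
Proof. by move=> nyv; rewrite mk_move (negbTE neq_uv) (negbTE nyv) andbF. Qed.

Lemma mk_move_v y : y != u -> mk s' v y = mk s v y.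
Proof. by move=> nyu; rewrite mk_move (negbTE nyu) (negbTE neq_vu) !andbF. Qed.

Lemma mk_move_other x y : x != u -> x != v -> mk s' x y = mk s x y.
Proof. by move=> nxu nxv; rewrite mk_move (negbTE nxu) (negbTE nxv). Qed.

Lemma active_move x : active s' x + (u == x) = active s x + (v == x).
Proof. by rewrite /active /s' /move /= -pos_a; move: active_a; case: a => /= ->; lia. Qed.

Lemma active_gt0 : 0 < active s u.
Proof. by rewrite /active -pos_a; move: active_a; case: a => /= ->; rewrite eqxx /=; lia. Qed.

Lemma backs_move_u : backs s' u + is_back (mk s u v) = backs s u + is_back mu.
Proof. by rewrite -mk_move_uv; apply: backs_change => y /mk_move_u. Qed.

Lemma backs_move_v : backs s' v + is_back (mk s v u) = backs s v + is_back mv.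
Proof. by rewrite -mk_move_vu; apply: backs_change => y /mk_move_v. Qed.

Lemma backs_move_other x : x != u -> x != v -> backs s' x = backs s x.
Proof.
by move=> nxu nxv; apply: eq_bigr => y _; rewrite mk_move_other.
Qed.

Lemma free_move_other x : x != u -> x != v ->
  (backs s' x < active s' x) = (backs s x < active s x).
Proof.
move=> nxu nxv; rewrite backs_move_other //; have := active_move x.
by rewrite eq_sym (negbTE nxu) eq_sym (negbTE nxv) !addn0 => ->.
Qed.

Lemma attended_move_v : ~~ is_back mv -> attended s' v.
Proof.
move=> mv_back; right; have := backs_move_v; have := active_move v.
have := backs_le_active Is v; rewrite eqxx (negbTE neq_uv) (negbTE mv_back); lia.
Qed.

Lemma backs_le_active_move : ~~ is_back mu -> mk s u v = MB \/ ~ has_mk adj s u MB ->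
  forall x, backs s' x <= active s' x.
Proof.
move=> mu_back owed x; have := active_move x; have := backs_le_active Is x.
case: (x =P u) => [->|/eqP nxu].
  rewrite eqxx (negbTE neq_vu); have := backs_move_u; rewrite (negbTE mu_back).
  by case: owed => [->|/(backs_eq0 Is) ->] /=; have := active_gt0; lia.
case: (x =P v) => [->|/eqP nxv].
  by rewrite eqxx (negbTE neq_uv); have := backs_move_v; case: is_back; lia.
by rewrite backs_move_other // eq_sym (negbTE nxu) eq_sym (negbTE nxv); lia.
Qed.

Lemma unfinished_move x : x != v \/ v \in visited s ->
  mk s u v <> MD -> mk s v u <> MD -> unfinished s' x -> unfinished s x.
Proof.
move=> old_x Nuv Nvu [x_vis [y xy Nxy]]; split.
  move: x_vis; rewrite visited_move in_setU1 => /orP [/eqP Exv|//].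
  by case: old_x; rewrite Exv ?eqxx.
move: Nxy; case: (mk_moveP x y) => [-> _ _|-> _ _|Nxy]; last by exists y.
  by exists v.
by exists u; rewrite // adj_sym.
Qed.

Lemma back_move z y : mk s z y = MB ->
  mk s' z y = MB \/ (z = u /\ y = v) \/ (z = v /\ y = u).
Proof. by case: (mk_moveP z y) => [-> ->|-> ->|]; auto. Qed.

Lemma attended_move y : attended s y ->
  [\/ attended s' y,
      y = u /\ (mk s v u = MB \/ backs s u < active s u) |
      y = v /\ (mk s u v = MB \/ backs s v < active s v)].
Proof.
case=> [[z /[dup] Bzy /back_move [B'zy|[[Ezu Eyv]|[Ezv Eyu]]]]|free].
- by constructor 1; left; exists z.
- by constructor 3; split; [|left; rewrite -Ezu -Eyv].
- by constructor 2; split; [|left; rewrite -Ezv -Eyu].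
case: (y =P u) => [Eyu|/eqP nyu]; first by constructor 2; split; [|right; rewrite -Eyu].
case: (y =P v) => [Eyv|/eqP nyv]; first by constructor 3; split; [|right; rewrite -Eyv].
by constructor 1; right; rewrite free_move_other.
Qed.

Lemma tree_edge_move x y : tree_edge s x y ->
  tree_edge s' x y \/ (x = u /\ y = v) \/ (x = v /\ y = u).
Proof. by rewrite /tree_edge; case: (mk_moveP x y) => [-> ->|-> ->|]; auto. Qed.

Lemma tree_edge_move_sub x y : mk s u v <> ME -> mk s u v <> MF ->
  tree_edge s x y -> tree_edge s' x y.
Proof.
move=> NE NF te; case/tree_edge_move: (te) => [//|[] [Ex Ey]].
all: by case: te; rewrite Ex Ey.
Qed.

Lemma tree_edge_move_done x y : mu = MD -> mv = MD -> tree_edge s' x y -> tree_edge s x y.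
Proof.
move=> Emu Emv; rewrite /tree_edge.
by case: (mk_moveP x y) => [_ _|_ _|//]; rewrite Emu Emv => -[].
Qed.

Lemma unfinished_move_u : mu = MD -> ~ has_mk adj s u MB -> ~ has_mk adj s u M0 ->
  (forall y, mk s u y = MF -> y = v) -> unfinished s' u ->
  attended s' u \/ exists c, [/\ tree_edge s' u c, unfinished s c & c <> u].
Proof.
move=> Emu no_back no_empty parent_v [_ [y uy Nuy]].
have nyv : y != v by apply/eqP => Eyv; apply: Nuy; rewrite Eyv mk_move_uv.
have nyu : y != u by rewrite eq_sym adj_neq.
move: Nuy; rewrite mk_move_u //.
case Euy: (mk s u y) => // _.
- by case: (not_has_mk no_empty uy Euy).
- have := compatible_mk Is uy; rewrite Euy; case Eyu: (mk s y u) => // _.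
    by left; left; exists y; rewrite mk_move_other.
  right; exists y; split; last exact/eqP.
    by rewrite /tree_edge mk_move_u // mk_move_other // Euy Eyu.
  split; first by apply: (@marked_visitedl s Is y u); rewrite Eyu.
  by exists u; rewrite 1?adj_sym // Eyu.
- by case: (not_has_mk no_back uy Euy).
- by move/parent_v: Euy => Eyv; rewrite Eyv eqxx in nyv.
Qed.

Lemma attended_back : mk s u v = MB -> mu = MD -> mv = MD -> all_attended s'.
Proof.
move=> Buv Emu Emv.
have Evu : mk s v u = ME by have := compatible_mk Is uv; rewrite Buv; case: (mk s v u).
have v_vis : v \in visited s by apply: (@marked_visitedr s Is u v); rewrite Buv.
apply: all_attended_sub (attended_unfinished Is) _ _ _.
- by move=> x y; apply: (@tree_edge_move_sub x y); rewrite Buv.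
- move=> y /attended_move [//|[-> [|free]]|[-> _]]; first by rewrite Evu.
    right; have := backs_move_u; have := active_move u; move: free.
    by rewrite Buv Emu (negbTE neq_vu) eqxx /=; lia.
  by apply: attended_move_v; rewrite Emv.
- by move=> x; apply: unfinished_move; rewrite ?Buv ?Evu //; right.
Qed.

Lemma attended_bounce : mk s u v = M0 -> mu = ME -> mv = MB -> v \in visited s ->
  all_attended s'.
Proof.
move=> Euv Emu Emv v_vis.
have Evu : mk s v u = M0 by have := compatible_mk Is uv; rewrite Euv; case: (mk s v u).
apply: all_attended_sub (attended_unfinished Is) _ _ _.
- by move=> x y; apply: (@tree_edge_move_sub x y); rewrite Euv.
- move=> y /attended_move [//|[-> _]|[-> [|free]]].
  + by left; exists v; rewrite mk_move_vu.
  + by rewrite Euv.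
  right; have := backs_move_v; have := active_move v; move: free.
  by rewrite Evu Emv (negbTE neq_uv) eqxx /=; lia.
- by move=> x; apply: unfinished_move; rewrite ?Euv ?Evu //; right.
Qed.

Lemma attended_discover : mk s u v = M0 -> mu = ME -> mv = MF -> all_attended s'.
Proof.
move=> Euv Emu Emv.
have Evu : mk s v u = M0 by have := compatible_mk Is uv; rewrite Euv; case: (mk s v u).
have att_v : attended s' v by apply: attended_move_v; rewrite Emv.
move=> x; case: (x =P v) => [-> _|/eqP nxv]; first by exists v => //; apply: rt1n_refl.
move=> unf'; have unf : unfinished s x.
  by apply: unfinished_move unf'; rewrite ?Euv ?Evu //; left.
have [y xy /attended_move att_y] := attended_unfinished Is unf.
have xy' : reach (tree_edge s') x y.
  by apply: reach_sub xy => p q; apply: (@tree_edge_move_sub p q); rewrite Euv.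
case: att_y => [|[Eyu _]|[Eyv _]]; [by exists y | | by exists v; rewrite // -Eyv].
exists v => //; apply: reach_rcons xy' _.
by rewrite Eyu /tree_edge mk_move_uv mk_move_vu.
Qed.

Lemma attended_retreat : mk s u v = MF -> mu = MD -> mv = MD ->
  ~ has_mk adj s u MB -> ~ has_mk adj s u M0 -> all_attended s'.
Proof.
move=> Fuv Emu Emv no_back no_empty.
have Evu : mk s v u = ME by have := compatible_mk Is uv; rewrite Fuv; case: (mk s v u).
have att_v : attended s' v by apply: attended_move_v; rewrite Emv.
apply: (@reach_witness_cut _ (tree_edge s) (tree_edge s') v u _
          (unfinished s) _ (attended s) _ u (attended_unfinished Is)).
- move=> x y te; case/tree_edge_move: (te) => [|[[Ex Ey]|[-> ->]]]; [by left| |by right].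
  by case: te; rewrite Ex Ey Fuv.
- by move=> x y; apply: tree_edge_move_done.
- by move=> x [_ Fux]; split; [apply: (parent_unique Is Fux Fuv) | apply/eqP; exact: neq_vu].
- by left.
- by move=> y /attended_move [|[-> _]|[-> _]]; [left|right|left].
- by move=> x; apply: unfinished_move; rewrite ?Fuv ?Evu //; right;
     apply: (@marked_visitedr s Is u v); rewrite Fuv.
- by apply: unfinished_move_u => // y Fuy; apply: (parent_unique Is Fuy Fuv).
Qed.

Lemma attended_close : mk s u v = ME -> mu = MD -> mv = MD ->
  ~ has_mk adj s u MB -> ~ has_mk adj s u M0 -> ~ has_mk adj s u MF -> all_attended s'.
Proof.
move=> Euv Emu Emv no_back no_empty no_parent.
have Bvu : mk s v u = MB \/ mk s v u = MF.
  by have := compatible_mk Is uv; rewrite Euv; case: (mk s v u) => // _; [left|right].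
have no_F y : mk s u y <> MF.
  by move=> Fuy; apply: (not_has_mk no_parent _ Fuy); apply: (marked_adj Is); rewrite Fuy.
apply: (@reach_witness_cut _ (tree_edge s) (tree_edge s') u v _
          (unfinished s) _ (attended s) _ u (attended_unfinished Is)).
- move=> x y te; case/tree_edge_move: (te) => [|[[-> ->]|[Ex Ey]]]; [by left|by right|].
  by case: te; rewrite Ex Ey Euv.
- by move=> x y; apply: tree_edge_move_done.
- by move=> x [_ /no_F].
- by right.
- move=> y /attended_move [|[-> _]|[-> _]]; [by left|by right|left].
  by apply: attended_move_v; rewrite Emv.
- move=> x; apply: unfinished_move; rewrite ?Euv //; last by case: Bvu => ->.
  by right; apply: (@marked_visitedr s Is u v); rewrite Euv.
- by apply: unfinished_move_u => // y /no_F.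
Qed.

Lemma parent_unique_move : mu <> MF -> (mv = MF -> forall z, mk s v z <> MF) ->
  forall x y z, mk s' x y = MF -> mk s' x z = MF -> y = z.
Proof.
move=> muF mvF x y z.
case: (x =P v) => [->|/eqP nxv].
  have Fv y' : mk s' v y' = MF -> y' = u /\ mv = MF \/ mk s v y' = MF.
    by case: (y' =P u) => [->|/eqP nyu]; rewrite ?mk_move_vu ?mk_move_v //; [left|right].
  move=> /Fv [[-> F]|Fy] /Fv [[-> F']|Fz] //; last exact: (parent_unique Is Fy Fz).
    by case: (mvF F z Fz).
  by case: (mvF F' y Fy).
case: (x =P u) => [->|/eqP nxu].
  have Fu y' : mk s' u y' = MF -> mk s u y' = MF.
    by case: (y' =P v) => [->|/eqP nyv]; [rewrite mk_move_uv => /muF|rewrite mk_move_u].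
  by move=> /Fu Fy /Fu Fz; apply: (parent_unique Is Fy Fz).
by rewrite !mk_move_other //; apply: (parent_unique Is).
Qed.

Section Ranks.
Hypotheses (rank_mu : rank mu = (rank (mk s u v)).+1)
           (rank_mv : rank mv = (rank (mk s v u)).+1).

Lemma weighted_rank_move : weighted_rank s' = (weighted_rank s + 2 * w [set u; v])%R.
Proof.
rewrite /weighted_rank; under eq_bigr do rewrite mk_move.
have vu : adj v u && ((v, u) != (u, v)) by rewrite adj_sym uv xpair_eqE (negbTE neq_vu).
rewrite (bigD1 (u, v)) //= [in RHS](bigD1 (u, v)) //= (bigD1 (v, u)) //=.
rewrite [in RHS](bigD1 (v, u)) //= (negbTE neq_vu) (negbTE neq_uv) !eqxx /=.
rewrite rank_mu rank_mv [[set v; u]]setUC.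
rewrite (eq_bigr (fun x : T * T => w [set x.1; x.2] * (rank (mk s x.1 x.2))%:R)%R).
  by rewrite -addn1 -[(rank (mk s v u)).+1]addn1 !natrD; ring.
case=> x1 x2 /= /andP [/andP [_ N1] N2].
by move: N1 N2; rewrite !xpair_eqE => /negbTE -> /negbTE ->.
Qed.

Lemma potential_move : potential s < potential s'.
Proof.
rewrite /potential -!addnA ltn_add2r.
apply: (@ltn_sum _ _ _ (u, v)) => [[x y]|]; last by rewrite mk_move_uv rank_mu.
by case: (mk_moveP x y) => [-> ->|-> ->|]; rewrite ?rank_mu ?rank_mv.
Qed.

Lemma move_progress : mu <> MF -> (mv = MF -> forall z, mk s v z <> MF) ->
  compatible mu mv -> ~~ is_back mu -> mk s u v = MB \/ ~ has_mk adj s u MB ->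
  all_attended s' -> invariant s' /\ potential s < potential s'.
Proof.
move=> muF mvF comp mu_back owed att; split; last exact: potential_move.
have mu0 : mu <> M0 by move: rank_mu; case: mu.
have mv0 : mv <> M0 by move: rank_mv; case: mv.
have u_vis : u \in visited s by rewrite -pos_a (pos_visited Is).
split=> //.
- move=> b; rewrite visited_move in_setU1 /s' /move /=.
  by case: (b == a); rewrite ?eqxx ?(pos_visited Is) ?orbT.
- move=> x y; rewrite visited_move explored_move !in_setU1.
  case: (mk_moveP x y) => [-> -> _|-> -> _|/(marked_explored Is) [-> -> -> ->]].
  + by rewrite uv u_vis !eqxx !orbT.
  + by rewrite adj_sym uv u_vis setUC !eqxx !orbT.
  + by rewrite !orbT.
- move=> x y xy.
  case: (mk_moveP x y) => [//|_ _|]; first by rewrite compatible_sym.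
  exact: (compatible_mk Is).
- exact: parent_unique_move.
- exact: backs_le_active_move.
- by rewrite weighted_rank_move -(cost_weighted_rank Is) /s' /move /= pos_a; ring.
Qed.

End Ranks.
End Move.

Section Halt.
Variables (s : state R T) (a : agent).
Hypotheses (Is : invariant s) (active_a : ~~ halted s a).
Hypotheses (no_back : ~ has_mk adj s (pos s a) MB) (no_empty : ~ has_mk adj s (pos s a) M0)
  (no_parent : ~ has_mk adj s (pos s a) MF) (no_pending : ~ has_mk adj s (pos s a) ME).

Lemma halt_done y : adj (pos s a) y -> mk s (pos s a) y = MD.
Proof.
move=> uy; case E: (mk s _ y) => //; exfalso.
- exact: not_has_mk no_empty uy E.
- exact: not_has_mk no_pending uy E.
- exact: not_has_mk no_back uy E.
- exact: not_has_mk no_parent uy E.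
Qed.

Lemma active_halt x : active (halt s a) x + (pos s a == x) = active s x.
Proof. by rewrite /active /=; case: a active_a => /= ->; rewrite ?andbT ?andbF; lia. Qed.

Lemma potential_halt : potential s < potential (halt s a).
Proof. by rewrite /potential /=; case: a active_a => /= /negbTE ->; lia. Qed.

Lemma halt_invariant : invariant (halt s a).
Proof.
have [? ? ? ? backs_le att ?] := Is; split=> //.
- move=> x; have -> : backs (halt s a) x = backs s x by [].
  have := active_halt x; have := backs_le x.
  case: (pos s a =P x) => [<-|_] /=; last by rewrite addn0 => _ ->.
  by rewrite (backs_eq0 Is no_back).
move=> x unf; have [y xy [Bzy|free]] := att x unf; first by exists y => //; left.
case: (pos s a =P y) => [Euy|/eqP nuy]; last first.
  by exists y => //; right; have := active_halt y; rewrite (negbTE nuy) addn0 => ->.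
(* No tree edge enters [pos s a]: all its passages are marked D. *)
have Exy : x = y.
  apply: reach_sourceless xy => z [_ Fyz].
  have uz : adj (pos s a) z by apply: (marked_adj Is); rewrite Euy Fyz.
  by move: (halt_done uz); rewrite Euy Fyz.
by case: unf => _ [z]; rewrite Exy -Euy => /halt_done ->.
Qed.

End Halt.

Lemma step_progress a s s' : invariant s -> step adj w a s s' ->
  invariant s' /\ (if halted s a then s' = s else potential s < potential s').
Proof.
move=> Is; case=> [->|v act uv Buv|v act _ uv Euv Evu|v act nb uv Euv _ v_old|
                   v act nb uv Euv _ v_new|v act nb n0 uv Fuv|v act nb n0 nf uv Euv|
                   act nb n0 nf ne] //; rewrite ?(negbTE act).
- have Evu : mk s v (pos s a) = ME.
    by have := compatible_mk Is uv; rewrite Buv; case: (mk s v _).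
  apply: (move_progress erefl uv act Is); rewrite ?Buv ?Evu //; first by left.
  exact: (attended_back erefl uv act Is).
- by have := compatible_mk Is uv; rewrite Euv Evu.
- have Evu : mk s v (pos s a) = M0.
    by have := compatible_mk Is uv; rewrite Euv; case: (mk s v _).
  apply: (move_progress erefl uv act Is); rewrite ?Euv ?Evu //; first by right.
  exact: (attended_bounce erefl uv act Is).
- have Evu : mk s v (pos s a) = M0.
    by have := compatible_mk Is uv; rewrite Euv; case: (mk s v _).
  apply: (move_progress erefl uv act Is); rewrite ?Euv ?Evu //; last 2 first.
  + by right.
  + exact: (attended_discover erefl uv act Is).
  by move=> _ z Fvz; move: v_new; rewrite (@marked_visitedl s Is v z) // Fvz.
- have Evu : mk s v (pos s a) = ME.
    by have := compatible_mk Is uv; rewrite Fuv; case: (mk s v _).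
  apply: (move_progress erefl uv act Is); rewrite ?Fuv ?Evu //; first by right.
  exact: (attended_retreat erefl uv act Is).
- have Evu : mk s v (pos s a) = MB \/ mk s v (pos s a) = MF.
    by have := compatible_mk Is uv; rewrite Euv; case: (mk s v _) => // _; [left|right].
  apply: (move_progress erefl uv act Is); rewrite ?Euv //; first by case: Evu => ->.
  + by right.
  + exact: (attended_close erefl uv act Is).
by split; [apply: halt_invariant | apply: potential_halt].
Qed.

Lemma halted_step a b s s' : step adj w a s s' -> halted s b -> halted s' b.
Proof. by case=> //= *; case: eqP. Qed.

Lemma init_invariant start : invariant (init R start).
Proof.
split=> //=.
- by move=> b; rewrite set11.
- by move=> u; rewrite /backs big1.
- move=> x [+ _]; rewrite in_set1 => /eqP ->; exists start; first exact: rt1n_refl.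
  by right; rewrite /backs big1 // /active /= eqxx.
- by rewrite mulr0 /weighted_rank big1 // => x _; rewrite mulr0.
Qed.

Lemma potential_le s : potential s <= \sum_(x : T * T) 2 + 2.
Proof.
rewrite /potential -addnA leq_add //; last by case: halted; case: halted.
by apply: leq_sum => x _; case: (mk s _ _).
Qed.

Section Run.
Variables (exec : nat -> state R T) (sched : nat -> agent) (start : T).
Hypotheses (exec0 : exec 0 = init R start)
  (exec_step : forall n, step adj w (sched n) (exec n) (exec n.+1))
  (fair : forall b n, exists2 m, n <= m & sched m = b).

Lemma exec_invariant n : invariant (exec n).
Proof.
elim: n => [|n IH]; first by rewrite exec0; apply: init_invariant.
exact: (step_progress IH (exec_step n)).1.
Qed.

Lemma exec_potential_mono : {homo (fun n => potential (exec n)) : m n / m <= n}.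
Proof.
apply: homo_leq leqnn (@leq_trans) _ => n.
have := (step_progress (exec_invariant n) (exec_step n)).2.
by case: halted => [->|/ltnW].
Qed.

Lemma exec_halted_mono b :
  {homo (fun n => halted (exec n) b) : m n / m <= n >-> (m -> n)}.
Proof.
apply: (@homo_leq _ _ (fun p q : bool => p -> q)) => [//|? ? ? f g /f/g //|n].
exact: halted_step (exec_step n).
Qed.

Lemma eventually_halted b : exists n, halted (exec n) b.
Proof.
have grow k : (exists n, halted (exec n) b) \/ exists n, k <= potential (exec n).
  elim: k => [|k [//|[n kn]]]; [by right; exists 0 | by left |].
  have [m nm sm] := fair b n.
  case hm: (halted (exec m) b); first by left; exists m.
  right; exists m.+1; have := (step_progress (exec_invariant m) (exec_step m)).2.
  by rewrite sm hm; have := exec_potential_mono nm; lia.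
have [//|[n]] := grow (\sum_(x : T * T) 2 + 3).
by have := potential_le (exec n); lia.
Qed.

Lemma eventually_all_halted : exists n, forall b, halted (exec n) b.
Proof.
have [n1 h1] := eventually_halted true; have [n2 h2] := eventually_halted false.
exists (maxn n1 n2) => -[]; [apply: exec_halted_mono h1 | apply: exec_halted_mono h2].
  exact: leq_maxl.
exact: leq_maxr.
Qed.

End Run.

Lemma halted_done s : invariant s -> (forall b, halted s b) ->
  forall x y, x \in visited s -> adj x y -> mk s x y = MD.
Proof.
move=> Is halted_all x y xv xy.
have no_active z : active s z = 0 by rewrite /active !halted_all /= !andbF.
have fin : ~ unfinished s x.
  move=> /(attended_unfinished Is) [z _ [[t Btz]|]]; last by rewrite no_active.
  by have := backs_gt0 Btz; have := backs_le_active Is t; rewrite no_active; lia.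
by case E: (mk s x y) => //; case: fin; split=> //; exists y => //; rewrite E.
Qed.

Lemma halted_explored s : invariant s -> (forall b, halted s b) ->
  (forall x y, connect adj x y) -> forall x y, adj x y -> [set x; y] \in explored s.
Proof.
move=> Is halted_all conn.
have all_visited y : y \in visited s.
  move/connectP: (conn (pos s true) y) => [p p_path ->].
  elim: p (pos s true) (pos_visited Is true) p_path => [//|z p IH] x xv /= /andP [xz p_path].
  apply: IH p_path; apply: (@marked_visitedr s Is x z).
  by rewrite (halted_done Is halted_all xv xz).
move=> x y xy; case: (marked_explored Is (x := x) (y := y)) => //.
by rewrite (halted_done Is halted_all (all_visited x) xy).
Qed.

Lemma cost_le s : invariant s -> (forall x y, adj x y -> 0 <= w [set x; y])%R ->
  (cost s <= 2 * total_weight adj w)%R.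
Proof.
move=> Is w_ge0.
have : (weighted_rank s <= \sum_(x : T * T | adj x.1 x.2) w [set x.1; x.2] * 2%:R)%R.
  apply: ler_sum => x xa; apply: ler_wpM2l; first exact: w_ge0.
  by rewrite ler_nat; case: (mk s _ _).
rewrite -mulr_suml sum_adj_pairs // -/(total_weight adj w) -(cost_weighted_rank Is).
by rewrite mulr2n; lra.
Qed.

End Exploration.

Local Open Scope ring_scope.

Theorem proposition19 (R : realFieldType) (T : finType) (adj : rel T)
    (w : {set T} -> R) (start : T) :
  symmetric adj -> irreflexive adj ->
  (forall x y : T, connect adj x y) ->
  (forall u v : T, adj u v -> 0 < w [set u; v]) ->
  forall (exec : nat -> state R T) (sched : nat -> agent),
    exec 0%N = init R start ->
    (forall n : nat, step adj w (sched n) (exec n) (exec n.+1)) ->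
    (forall (a : agent) (n : nat), exists2 m : nat, (n <= m)%N & sched m = a) ->
    (exists n : nat, forall u v : T, adj u v -> [set u; v] \in explored (exec n)) /\
    (forall n : nat, cost (exec n) <= 2 * total_weight adj w).
Proof.
move=> adj_sym adj_irr conn w_pos exec sched exec0 exec_step fair.
have exec_inv := exec_invariant adj_sym adj_irr exec0 exec_step.
split.
  have [n halted_n] := eventually_all_halted adj_sym adj_irr exec0 exec_step fair.
  by exists n; apply: halted_explored (exec_inv n) halted_n conn.
move=> n; apply: (cost_le adj_sym adj_irr (exec_inv n)).
by move=> x y /w_pos /ltW.
Qed.
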